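(* For every $n\ge2$, $$|\mathcal{B}_n(321)|=C(n)-C(n-1)=\frac{3}{n+1}\binom{2n-2}{n-2},$$ where $C(m)=\frac{1}{m+1}\binom{2m}{m}$ is the $m$-th Catalan number.
   Context: A ballot permutation is a $\pi\in\mathfrak{S}_n$ such that every prefix $\pi_1\cdots\pi_i$ has at most as many descents ($\pi_j>\pi_{j+1}$) as ascents ($\pi_j<\pi_{j+1}$); $\mathcal{B}_n$ denotes the set of them. A permutation avoids the pattern $\sigma\in\mathfrak{S}_k$ if it has no subsequence order-isomorphic to $\sigma$; $\mathcal{B}_n(\sigma)$ is the set of $\sigma$-avoiding elements of $\mathcal{B}_n$. *)

From mathcomp Require Import all_boot all_order all_algebra all_fingroup.
Set Implicit Arguments. Unset Strict Implicit. Unset Printing Implicit Defensive.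

(* Permutations of {0,...,n-1} as 'S_n; pi_1 ... pi_n is s 0, ..., s (n-1).
   Positions/values are 0-indexed, which does not affect descents, ascents
   or pattern containment. *)

(* number of descents (resp. ascents) among adjacent pairs (j, j+1) with j+1 < i,
   i.e. within the prefix pi_1 ... pi_i *)
Definition ndes_prefix n (s : 'S_n) (i : nat) : nat :=
  #|[set j : 'I_n | (j.+1 < i) && [exists k : 'I_n, (val k == j.+1) && (s k < s j)]]|.
Definition nasc_prefix n (s : 'S_n) (i : nat) : nat :=
  #|[set j : 'I_n | (j.+1 < i) && [exists k : 'I_n, (val k == j.+1) && (s j < s k)]]|.

Definition ballot n (s : 'S_n) : bool :=
  [forall i : 'I_n.+1, ndes_prefix s i <= nasc_prefix s i].

Definition contains321 n (s : 'S_n) : bool :=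
  [exists i : 'I_n, exists j : 'I_n, exists k : 'I_n,
     [&& i < j, j < k, s j < s i & s k < s j]].

Definition B321 n : {set 'S_n} := [set s : 'S_n | ballot s && ~~ contains321 s].

Definition catalan (m : nat) : rat := ('C(m.*2, m))%:R / (m.+1)%:R.

From mathcomp Require Import all_boot all_order all_algebra all_fingroup.
From mathcomp Require Import zify ring lra.
Set Implicit Arguments. Unset Strict Implicit. Unset Printing Implicit Defensive.

(* The proof works with a permutation of {0..n-1} as the sequence of its values
   and has three ingredients.
   1. Generating tree.  Every 321-avoiding sequence of length n+1 arises
      uniquely by inserting the maximum n into a 321-avoiding sequence s of
      length n, at any position inside or just before the longest increasing
      suffix of s; the children of a node with increasing suffix of length r
      have increasing suffixes of lengths r+1, r, ..., 1.  Counting leaves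
      gives the ballot numbers [tree_count k r] = (r+1)/(k+r+1) binom(2k+r, k),
      so there are C(n) 321-avoiders of length n.
   2. A 321-avoider of length m+2 starting with a descent has 0 in second
      place; deleting it is a bijection onto the 321-avoiders of length m+1.
   3. A 321-avoider has no two consecutive descents, so it is a ballot
      permutation iff it starts with an ascent.
   Hence |B_{m+2}(321)| = C(m+2) - C(m+1), which the tree recurrence
   identifies with [tree_count m 2] = 3/(m+3) binom(2m+2, m). *)

Fixpoint inc_suffix (l : seq nat) : nat :=
  if l is x :: l' then (if path leq x l' then (size l').+1 else inc_suffix l')
  else 0.

Lemma inc_suffix_le l : inc_suffix l <= size l.
Proof. by elim: l => [|x l IH] //=; case: ifP => // _; exact: leqW. Qed.

Lemma sorted_drop_inc_suffix l p :
  sorted leq (drop p l) = (size l - p <= inc_suffix l).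
Proof.
elim: l p => [|x l IH] [|p] //=.
- case: ifP => _; first by rewrite subn0 leqnn.
  by rewrite subn0 ltnNge inc_suffix_le.
- rewrite subSS IH; case: ifP => // /path_sorted Hl.
  by rewrite -IH drop_sorted //; apply/esym; lia.
Qed.

Lemma inc_suffix_unique l k : k <= size l ->
  (forall p, sorted leq (drop p l) = (size l - p <= k)) -> inc_suffix l = k.
Proof.
move=> Hk H; apply/eqP; rewrite eqn_leq; apply/andP; split.
- by have := H (size l - inc_suffix l);
    rewrite sorted_drop_inc_suffix subKn ?inc_suffix_le // leqnn => /esym.
- by have := H (size l - k); rewrite sorted_drop_inc_suffix subKn // leqnn => ->.
Qed.

(* [no21below x l]: no entries l_j, l_k with j < k and l_k < l_j < x, i.e.
   prefixing x to l creates no occurrence of 321 starting at x. *)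
Fixpoint no21below (x : nat) (l : seq nat) : bool :=
  if l is y :: l' then ((x <= y) || all (leq y) l') && no21below x l' else true.

Fixpoint avoids321 (l : seq nat) : bool :=
  if l is x :: l' then no21below x l' && avoids321 l' else true.

Definition pattern321 (l : seq nat) : Prop :=
  exists i j k, [/\ i < j, j < k, k < size l,
                    nth 0 l j < nth 0 l i & nth 0 l k < nth 0 l j].

Lemma no21belowPn x l :
  reflect (exists j k, [/\ j < k, k < size l, nth 0 l j < x & nth 0 l k < nth 0 l j])
          (~~ no21below x l).
Proof.
elim: l => [|y l IH] /=; first by constructor=> -[j [k [_]]]; rewrite ltn0.
rewrite negb_and; apply: (iffP orP).
- case=> [/norP [Hxy] | /IH [j [k [? ? ? ?]]]]; last by exists j.+1, k.+1.
  rewrite -has_predC => /hasP [z zl /= Hz]; exists 0, (index z l).+1.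
  by split; rewrite //= ?ltnS ?index_mem ?nth_index // ltnNge.
- move=> [[|j] [[|k] [//= Hjk Hk Hx Hkj]]]; last by right; apply/IH; exists j, k.
  left; apply/norP; rewrite -ltnNge Hx; split=> //.
  by apply/negP => /(all_nthP 0) /(_ k Hk); rewrite leqNgt Hkj.
Qed.

Lemma avoids321Pn l : reflect (pattern321 l) (~~ avoids321 l).
Proof.
elim: l => [|y l IH] /=; first by constructor=> -[i [j [k [_ _]]]]; rewrite ltn0.
rewrite negb_and; apply: (iffP orP).
- case=> [/no21belowPn [j [k [? ? ? ?]]] | /IH [i [j [k [? ? ? ? ?]]]]].
  + by exists 0, j.+1, k.+1.
  + by exists i.+1, j.+1, k.+1.
- move=> [[|i] [[|j] [[|k] [//= Hij Hjk Hk Hji Hkj]]]].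
  + by left; apply/no21belowPn; exists j, k.
  + by right; apply/IH; exists i, j, k.
Qed.

Definition insert_at (v p : nat) (s : seq nat) := take p s ++ v :: drop p s.

Lemma size_insert_at v p s : size (insert_at v p s) = (size s).+1.
Proof. by rewrite size_cat /= size_take size_drop; case: ltnP => ?; lia. Qed.

Lemma perm_insert_at v p s : perm_eq (insert_at v p s) (v :: s).
Proof. by rewrite /insert_at -cat1s perm_catCA cat_take_drop. Qed.

Lemma no21below_insert_above x v a b :
  x < v -> no21below x (a ++ v :: b) = no21below x (a ++ b).
Proof.
move=> Hxv; elim: a => [|y a IH] /=; first by rewrite ltnW.
rewrite IH !all_cat /=; case: (leqP x y) => //= Hyx.
by rewrite (leq_trans (ltnW Hyx) (ltnW Hxv)).
Qed.

Lemma no21below_sorted v l : all (fun y => y < v) l -> no21below v l = sorted leq l.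
Proof.
elim: l => [|y l IH] //= /andP [Hy Hl].
by rewrite IH // leqNgt Hy (path_sortedE leq_trans).
Qed.

Lemma avoids321_insert_max v p s : all (fun y => y < v) s ->
  avoids321 (insert_at v p s) = sorted leq (drop p s) && avoids321 s.
Proof.
elim: s p => [|x s IH] [|p] //= /andP [Hx Hs].
- by rewrite leqNgt Hx no21below_sorted // (path_sortedE leq_trans) andbA.
- by rewrite no21below_insert_above // cat_take_drop -/(insert_at v p s) IH // andbCA.
Qed.

Lemma sorted_rcons_max l v : all (fun y => y <= v) l ->
  sorted leq (rcons l v) = sorted leq l.
Proof.
case: l => [|x l] // /allP Hl /=.
by rewrite rcons_path (Hl (last x l)) ?andbT // mem_last.
Qed.

Lemma inc_suffix_rcons_max s v : all (fun y => y <= v) s ->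
  inc_suffix (rcons s v) = (inc_suffix s).+1.
Proof.
move=> Hs; apply: inc_suffix_unique; first by rewrite size_rcons ltnS inc_suffix_le.
move=> q; rewrite size_rcons -cats1 drop_cat.
case: ltnP => Hq.
- rewrite cats1 sorted_rcons_max; last by apply/allP=> y /mem_drop /(allP Hs).
  by rewrite sorted_drop_inc_suffix; lia.
- by case: (q - size s) => [|d] /=; lia.
Qed.

Lemma inc_suffix_insert_max s v m : all (fun y => y < v) s ->
  0 < m <= inc_suffix s -> inc_suffix (insert_at v (size s - m) s) = m.
Proof.
move=> Hs /andP [Hm0 Hm]; have Hls := inc_suffix_le s.
apply: inc_suffix_unique; first by rewrite size_insert_at; lia.
have Hp : size s - m < size s by lia.
have Hdrop := drop_nth 0 Hp.
have Hv : nth 0 s (size s - m) < v by apply: (all_nthP 0 Hs).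
have Hsuffix : sorted leq (drop (size s - m) s) by rewrite sorted_drop_inc_suffix; lia.
move=> q; rewrite size_insert_at /insert_at drop_cat size_takel ?leq_subr //.
case: ltnP => Hq.
- have -> : ((size s).+1 - q <= m) = false by apply/negbTE; rewrite -ltnNge; lia.
  apply/negbTE/negP => /cat_sorted2 [_].
  by rewrite Hdrop /= leqNgt Hv.
- case E: (q - (size s - m)) => [|d] /=.
  + by rewrite Hdrop /= leqNgt Hv /=; apply/esym/negbTE; lia.
  + by rewrite drop_sorted //; apply/esym; lia.
Qed.

Lemma insert_at_end v s : insert_at v (size s) s = rcons s v.
Proof. by rewrite /insert_at take_size drop_size cats1. Qed.

(* The positions at which the maximum can be inserted into a 321-avoider
   without creating a 321: those inside or just before its increasing suffix. *)
Definition positions (s : seq nat) : seq nat :=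
  iota (size s - inc_suffix s) (inc_suffix s).+1.

Lemma positions_le s p : p \in positions s -> p <= size s.
Proof. by rewrite mem_iota; have := inc_suffix_le s; lia. Qed.

Lemma avoids321_insert_maxE v p s : all (fun y => y < v) s -> p <= size s ->
  avoids321 (insert_at v p s) = (p \in positions s) && avoids321 s.
Proof.
move=> Hs Hp; rewrite avoids321_insert_max // sorted_drop_inc_suffix mem_iota.
by congr (_ && _); have := inc_suffix_le s; lia.
Qed.

Lemma insert_at_split v a b : a ++ v :: b = insert_at v (size a) (a ++ b).
Proof. by rewrite /insert_at take_size_cat // drop_size_cat. Qed.

Lemma index_insert_at v p s : v \notin s -> p <= size s -> index v (insert_at v p s) = p.
Proof.
move=> Hv Hp; rewrite /insert_at index_cat /= eqxx addn0 size_takel //.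
by rewrite (negbTE (contra (@mem_take _ _ _ _) Hv)).
Qed.

Lemma insert_atK v p s : v \notin s -> [seq x <- insert_at v p s | x != v] = s.
Proof.
move=> Hv; rewrite filter_cat /= eqxx -filter_cat cat_take_drop.
by apply/all_filterP/allP => x xs; apply: contraNneq Hv => <-.
Qed.

Lemma perm_insert_iota n p s :
  perm_eq (insert_at n p s) (iota 0 n.+1) = perm_eq s (iota 0 n).
Proof.
rewrite (permPl (perm_insert_at n p s)) -addn1 iotaD cats1 perm_sym.
by rewrite perm_rcons perm_cons perm_sym.
Qed.

Lemma perm_iota_lt s n : perm_eq s (iota 0 n) -> all (fun y => y < n) s.
Proof. by move=> /perm_mem Hs; apply/allP => y; rewrite Hs mem_iota. Qed.

Lemma perm_iota_size s n : perm_eq s (iota 0 n) -> size s = n.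
Proof. by move=> /perm_size ->; rewrite size_iota. Qed.

Fixpoint avoiders (n : nat) : seq (seq nat) :=
  if n is n'.+1 then [seq insert_at n' p s | s <- avoiders n', p <- positions s]
  else [:: [::]].

Lemma avoidersS n :
  avoiders n.+1 = [seq insert_at n p s | s <- avoiders n, p <- positions s].
Proof. by []. Qed.

Lemma mem_avoiders n t :
  (t \in avoiders n) = perm_eq t (iota 0 n) && avoids321 t.
Proof.
elim: n t => [|n IH] t.
  rewrite inE; case: t => [|x t] //=.
  by apply/esym/negbTE/negP => /andP [/perm_size].
rewrite avoidersS; apply/allpairsPdep/andP.
- move=> [s [p [+ Hp ->]]]; rewrite IH => /andP [Hperm Havoid].
  have Hsize := perm_iota_size Hperm.
  rewrite perm_insert_iota avoids321_insert_maxE ?Hsize ?Hp ?Havoid //.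
  + exact: perm_iota_lt Hperm.
  + by rewrite -Hsize positions_le.
- move=> [Hperm Havoid].
  have Hn : n \in t by rewrite (perm_mem Hperm) mem_iota leq0n ltnSn.
  move: Hperm Havoid; case/splitPr: Hn => a b; rewrite insert_at_split perm_insert_iota.
  move=> Hperm; have Hsize := perm_iota_size Hperm.
  have Ha : size a <= n by rewrite -Hsize size_cat leq_addr.
  rewrite avoids321_insert_maxE ?perm_iota_lt ?Hsize // => /andP [Hp Havoid].
  by exists (a ++ b), (size a); rewrite IH Hperm Havoid Hp.
Qed.

(* ... each exactly once: the position of the maximum and the parent are
   recovered from a child. *)
Lemma uniq_avoiders n : uniq (avoiders n).
Proof.
elim: n => [|n IH] //; rewrite avoidersS.
apply: (@allpairs_uniq_dep _ (fun=> nat)) => // [s _|].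
  exact: iota_uniq.
move=> _ _ /allpairsPdep [s [p [Hs Hp ->]]] /allpairsPdep [s' [q [Hs' Hq ->]]] /= E.
have [Hperm Hperm'] : perm_eq s (iota 0 n) /\ perm_eq s' (iota 0 n).
  by move: Hs Hs'; rewrite !mem_avoiders => /andP [? _] /andP [? _].
have fresh u : perm_eq u (iota 0 n) -> n \notin u.
  by move=> /perm_mem ->; rewrite mem_iota ltnn.
have Epq : p = q.
  rewrite -(index_insert_at (fresh _ Hperm) (positions_le Hp)) E.
  exact: index_insert_at (fresh _ Hperm') (positions_le Hq).
have Ess' : s = s' by rewrite -(insert_atK p (fresh _ Hperm)) E insert_atK // fresh.
by rewrite Ess' Epq.
Qed.

(* [tree_count k r]: number of descendants k levels below a node whose
   increasing suffix has length r.  Such a node has r+1 children, whose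
   increasing suffixes have lengths r+1, r, r-1, ..., 1. *)
Fixpoint tree_count (k r : nat) : nat :=
  if k is k'.+1 then
    \sum_(i < r.+1) tree_count k' (if i == r :> nat then r.+1 else r - i)
  else 1.

Lemma children_count k s : all (fun y => y < size s) s ->
  \sum_(p <- positions s) tree_count k (inc_suffix (insert_at (size s) p s)) =
  tree_count k.+1 (inc_suffix s).
Proof.
move=> Hs; set L := inc_suffix s; have HL : L <= size s := inc_suffix_le s.
rewrite /positions -/L -[size s - L]addn0 iotaDl big_map.
rewrite -[iota 0 _]/(index_iota 0 L.+1) big_mkord; apply: eq_bigr => i _.
have -> : size s - L + i = size s - (L - i) by have := ltn_ord i; lia.
case: eqP => [-> | /eqP Hi].
- rewrite subnn subn0 insert_at_end inc_suffix_rcons_max //.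
  by apply: sub_all Hs => y /ltnW.
- rewrite inc_suffix_insert_max // leq_subr andbT subn_gt0 ltn_neqAle Hi.
  by rewrite -ltnS ltn_ord.
Qed.

Lemma avoiders_weight k n :
  \sum_(s <- avoiders n) tree_count k (inc_suffix s) = size (avoiders (n + k)).
Proof.
elim: k n => [|k IH] n; first by rewrite addn0 sum1_size.
rewrite addnS -addSn -IH avoidersS big_allpairs_dep; apply: eq_big_seq => s.
rewrite mem_avoiders => /andP [Hperm _].
by rewrite -(perm_iota_size Hperm) children_count // (perm_iota_size Hperm) perm_iota_lt.
Qed.

Lemma count_avoids321 n : count avoids321 (permutations (iota 0 n)) = tree_count n 0.
Proof.
have -> : tree_count n 0 = size (avoiders n).
  by rewrite -[n in avoiders n]add0n -avoiders_weight big_seq1.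
rewrite -size_filter; apply/perm_size/uniq_perm.
- by rewrite filter_uniq // permutations_uniq.
- exact: uniq_avoiders.
- by move=> t; rewrite mem_filter mem_permutations mem_avoiders andbC.
Qed.

Lemma tree_count0 k : tree_count k.+1 0 = tree_count k 1.
Proof. by rewrite /= big_ord1. Qed.

Lemma tree_countS k r : tree_count k.+1 r.+1 = tree_count k.+1 r + tree_count k r.+2.
Proof.
rewrite /= big_ord_recr /= eqxx; congr (_ + _).
rewrite [RHS]big_ord_recr [LHS]big_ord_recl /= eqxx subn0 addnC; congr (_ + _).
apply: eq_bigr => i _ /=.
by rewrite eqSS !(ltn_eqF (ltn_ord i)) subSS.
Qed.

Lemma tree_count_diff m : tree_count m.+2 0 = tree_count m.+1 0 + tree_count m 2.
Proof. by rewrite !tree_count0 tree_countS tree_count0. Qed.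

Definition starts_desc (l : seq nat) : bool := nth 0 l 1 < nth 0 l 0.

Definition lift_desc (l : seq nat) : seq nat :=
  if l is x :: t then x.+1 :: 0 :: map succn t else [::].

Lemma lift_desc_inj : injective lift_desc.
Proof. by move=> [|x t] [|y u] //= [-> /(inj_map succn_inj) ->]. Qed.

Lemma no21below0 l : no21below 0 l.
Proof. by elim: l => //= y l ->; rewrite andbT. Qed.

Lemma no21below_succ x t : no21below x.+1 (map succn t) = no21below x t.
Proof. by elim: t => //= y t ->; rewrite ltnS all_map. Qed.

Lemma avoids321_succ t : avoids321 (map succn t) = avoids321 t.
Proof. by elim: t => //= y t ->; rewrite no21below_succ. Qed.

(* Lifting preserves 321-avoidance: the new minimum 0 could only be the "1"
   of a 321, which needs two larger entries before it, but only one precedes. *)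
Lemma avoids321_lift_desc l : avoids321 (lift_desc l) = avoids321 l.
Proof.
case: l => [|x t] //=; rewrite no21below0 avoids321_succ no21below_succ.
by have -> : all (leq 0) (map succn t) by apply/allP.
Qed.

Lemma perm_lift_desc x t k :
  perm_eq (lift_desc (x :: t)) (iota 0 k.+2) = perm_eq (x :: t) (iota 0 k.+1).
Proof.
rewrite -[lift_desc _]/([:: x.+1] ++ [:: 0] ++ map succn t) perm_catCA.
have -> : iota 0 k.+2 = 0 :: map succn (iota 0 k.+1) by rewrite -(iotaDl 1 0).
rewrite perm_cons -[_ ++ _]/(map succn (x :: t)).
apply/idP/idP; [exact: (perm_map_inj succn_inj) | exact: perm_map].
Qed.

(* In a 321-avoiding permutation of {0..m+1} that starts with a descent,
   the second entry is 0: otherwise the first two entries and 0 form a 321.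
   Hence it is the lift of a 321-avoiding permutation of {0..m}. *)
Lemma starts_desc_lift m l : perm_eq l (iota 0 m.+2) -> avoids321 l ->
  starts_desc l -> exists2 u, perm_eq u (iota 0 m.+1) & l = lift_desc u.
Proof.
move=> Hperm Havoid; have Hu : uniq l by rewrite (perm_uniq Hperm) iota_uniq.
have H0 : 0 \in l by rewrite (perm_mem Hperm) mem_iota.
case: l Hperm Havoid Hu H0 => [|a [|b t]] Hperm; try by have := perm_iota_size Hperm.
rewrite /starts_desc /= => /andP [/andP [Hab _] _] /and3P [_ Hbt _] H0 Hba.
have Hb0 : b = 0.
  move: Hab; rewrite leqNgt Hba /= => /allP Ht.
  move: H0; rewrite !inE => /or3P [/eqP Ea | /eqP // | /Ht].
    by move: Hba; rewrite -Ea.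
  by rewrite leqn0 => /eqP.
subst b.
have Et : map succn (map predn t) = t.
  rewrite -map_comp -[RHS]map_id; apply/eq_in_map => y Hy /=.
  by rewrite prednK // lt0n; apply: contraNneq Hbt => <-.
exists (a.-1 :: map predn t); last by rewrite /= Et prednK.
by rewrite -perm_lift_desc /= Et prednK.
Qed.

Lemma count_starts_desc m :
  count (fun l => avoids321 l && starts_desc l) (permutations (iota 0 m.+2)) =
  count avoids321 (permutations (iota 0 m.+1)).
Proof.
rewrite -!size_filter -[RHS](size_map lift_desc); apply/perm_size/uniq_perm.
- by rewrite filter_uniq // permutations_uniq.
- by rewrite (map_inj_uniq lift_desc_inj) filter_uniq // permutations_uniq.
move=> l; rewrite mem_filter mem_permutations; apply/andP/mapP.
- move=> [/andP [Havoid Hdesc] Hperm].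
  have [u Hu El] := starts_desc_lift Hperm Havoid Hdesc.
  exists u => //; rewrite mem_filter mem_permutations Hu andbT.
  by rewrite -avoids321_lift_desc -El.
- move=> [[|x t]]; rewrite mem_filter mem_permutations => /andP [Havoid Hperm] ->.
    by have := perm_iota_size Hperm.
  by rewrite avoids321_lift_desc Havoid perm_lift_desc.
Qed.

Definition seq_of_perm n (s : 'S_n) : seq nat := [seq val (s i) | i <- enum 'I_n].

Lemma size_seq_of_perm n (s : 'S_n) : size (seq_of_perm s) = n.
Proof. by rewrite size_map size_enum_ord. Qed.

Lemma nth_seq_of_perm n (s : 'S_n) (i : 'I_n) : nth 0 (seq_of_perm s) i = s i.
Proof. by rewrite (nth_map i) ?size_enum_ord // nth_ord_enum. Qed.

Lemma perm_seq_of_perm n (s : 'S_n) : perm_eq (seq_of_perm s) (iota 0 n).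
Proof.
apply: uniq_perm; rewrite ?iota_uniq //.
  by rewrite map_inj_uniq ?enum_uniq // => i j /val_inj; exact: perm_inj.
move=> x; rewrite mem_iota add0n; apply/mapP/idP.
- by move=> [i _ ->]; exact: ltn_ord.
- by move=> Hx; exists (s^-1 (Ordinal Hx))%g; rewrite ?mem_enum ?permKV.
Qed.

Lemma seq_of_perm_inj n : injective (@seq_of_perm n).
Proof.
move=> s t E; apply/permP => i; apply: ord_inj.
by rewrite -!nth_seq_of_perm E.
Qed.

Lemma seq_of_perm_surj n l : perm_eq l (iota 0 n) -> exists s : 'S_n, seq_of_perm s = l.
Proof.
move=> Hperm; have Hsize := perm_iota_size Hperm.
have Hlt (i : 'I_n) : nth 0 l i < n.
  by apply: (all_nthP 0 (perm_iota_lt Hperm)); rewrite Hsize.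
have Hu : uniq l by rewrite (perm_uniq Hperm) iota_uniq.
pose f (i : 'I_n) : 'I_n := Ordinal (Hlt i).
have f_inj : injective f.
  move=> i j /(congr1 val) /eqP /=.
  by rewrite nth_uniq ?Hsize // => /eqP /val_inj.
exists (perm f_inj); apply: (@eq_from_nth _ 0); first by rewrite size_seq_of_perm Hsize.
move=> i; rewrite size_seq_of_perm => Hi.
by rewrite -[i]/(val (Ordinal Hi)) nth_seq_of_perm permE.
Qed.

Lemma card_perm_seq n (P : pred (seq nat)) :
  #|[set s : 'S_n | P (seq_of_perm s)]| = count P (permutations (iota 0 n)).
Proof.
rewrite cardE -(size_map (@seq_of_perm n)) -size_filter; apply/perm_size/uniq_perm.
- by rewrite map_inj_uniq ?enum_uniq //; exact: seq_of_perm_inj.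
- by rewrite filter_uniq // permutations_uniq.
move=> l; rewrite mem_filter mem_permutations; apply/mapP/andP.
- by move=> [s]; rewrite mem_enum inE => Hs ->; split=> //; exact: perm_seq_of_perm.
- move=> [HP Hperm]; have [s Es] := seq_of_perm_surj Hperm.
  by exists s => //; rewrite mem_enum inE Es.
Qed.

Lemma contains321_seq n (s : 'S_n) : contains321 s = ~~ avoids321 (seq_of_perm s).
Proof.
apply/existsP/avoids321Pn.
- move=> [i /existsP [j /existsP [k /and4P [Hij Hjk Hji Hkj]]]].
  by exists i, j, k; rewrite size_seq_of_perm !nth_seq_of_perm.
- move=> [i [j [k []]]]; rewrite size_seq_of_perm => Hij Hjk Hk.
  have Hj : j < n by apply: ltn_trans Hk.
  have Hi : i < n by apply: ltn_trans Hj.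
  rewrite -[i]/(val (Ordinal Hi)) -[j]/(val (Ordinal Hj)) -[k]/(val (Ordinal Hk)).
  rewrite !nth_seq_of_perm => Hji Hkj; exists (Ordinal Hi).
  by apply/existsP; exists (Ordinal Hj); apply/existsP; exists (Ordinal Hk); apply/and4P.
Qed.

(* In a 321-avoiding permutation a descent at position j > 0 is preceded by
   an ascent: two consecutive descents would form a 321. *)
Lemma descent_after_ascent n (s : 'S_n) (h j k : 'I_n) : ~~ contains321 s ->
  j = h.+1 :> nat -> k = j.+1 :> nat -> s k < s j -> s h < s j.
Proof.
move=> Hnc Ej Ek Hkj; case: (ltngtP (s h) (s j)) => // [Hjh | Ehj].
- rewrite -(negbTE Hnc); apply/existsP; exists h; apply/existsP; exists j.
  by apply/existsP; exists k; rewrite Hjh Hkj Ek Ej !ltnSn.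
- by have := congr1 (@nat_of_ord n) (perm_inj (ord_inj Ehj)); lia.
Qed.

(* Hence a 321-avoider starting with an ascent is a ballot permutation:
   j |-> j-1 maps the descents of each prefix injectively to its ascents. *)
Lemma ballot_of_asc_start n (s : 'S_n) : ~~ contains321 s ->
  (forall j k : 'I_n, val j = 0 -> val k = 1 -> ~~ (s k < s j)) -> ballot s.
Proof.
move=> Hnc Hstart; apply/forallP => i; rewrite /ndes_prefix /nasc_prefix.
set D := [set _ | _]; set A := [set _ | _].
pose pred_ord (j : 'I_n) : 'I_n := Ordinal (leq_ltn_trans (leq_pred j) (ltn_ord j)).
have Dpos j : j \in D -> 0 < j.
  rewrite inE => /andP [_ /existsP [k /andP [/eqP Ek Hkj]]].
  by rewrite lt0n; apply: contraTneq Hkj => Ej; apply: Hstart; rewrite ?Ek ?Ej.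
have pred_inj : {in D &, injective pred_ord}.
  move=> j j' Hj Hj' /(congr1 val) /= E.
  by apply: ord_inj; have := Dpos _ Hj; have := Dpos _ Hj'; lia.
rewrite -(card_in_imset pred_inj); apply/subset_leq_card/subsetP.
move=> _ /imsetP [j Hj ->]; have Hj0 := Dpos _ Hj.
move: Hj; rewrite !inE => /andP [Hji /existsP [k /andP [/eqP Ek Hkj]]].
rewrite /pred_ord /= prednK // (ltnW Hji); apply/existsP; exists j; rewrite eqxx.
by apply: (descent_after_ascent Hnc _ Ek Hkj); rewrite /= prednK.
Qed.

(* Conversely every ballot permutation starts with an ascent: the prefix of
   length 2 must not be a descent. *)
Lemma ballot_starts_asc m (s : 'S_m.+2) : ballot s -> ~~ (s (inord 1) < s ord0).
Proof.
move=> /forallP /(_ (inord 2)); apply: contraTN => Hdesc.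
rewrite /ndes_prefix /nasc_prefix inordK // -ltnNge.
have -> : [set j : 'I_m.+2 | (j.+1 < 2) && [exists k : 'I_m.+2,
              (val k == j.+1) && (s j < s k)]] = set0.
  apply/setP => j; rewrite !inE; apply/negbTE/negP.
  move=> /andP [Hj /existsP [k /andP [/eqP Ek]]].
  have -> : j = ord0 by apply: ord_inj => /=; lia.
  have -> : k = inord 1.
    by apply: ord_inj; rewrite inordK // (Ek : nat_of_ord k = _); lia.
  by rewrite ltnNge (ltnW Hdesc).
rewrite cards0 card_gt0; apply/set0Pn; exists ord0; rewrite inE /=.
by apply/existsP; exists (inord 1); rewrite inordK // eqxx.
Qed.

Lemma ballot_avoider m (s : 'S_m.+2) :
  ~~ contains321 s -> ballot s = ~~ (s (inord 1) < s ord0).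
Proof.
move=> Hnc; apply/idP/idP; first exact: ballot_starts_asc.
move=> Hasc; apply: ballot_of_asc_start => // j k Ej Ek.
have -> : j = ord0 by apply: ord_inj.
by have -> : k = inord 1 by apply: ord_inj; rewrite inordK.
Qed.

Lemma starts_desc_seq_of_perm m (s : 'S_m.+2) :
  starts_desc (seq_of_perm s) = (s (inord 1) < s ord0).
Proof.
rewrite /starts_desc -(nth_seq_of_perm s ord0) -(nth_seq_of_perm s (inord 1)).
by rewrite inordK.
Qed.

Lemma card_B321 m : #|B321 m.+2| =
  count (fun l => avoids321 l && ~~ starts_desc l) (permutations (iota 0 m.+2)).
Proof.
rewrite -card_perm_seq; apply: eq_card => s; rewrite !inE andbC.
rewrite contains321_seq negbK starts_desc_seq_of_perm.
case Havoid: (avoids321 _) => //=.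
by rewrite ballot_avoider // contains321_seq Havoid.
Qed.

Lemma count_split (T : Type) (a b : pred T) s :
  count (fun x => a x && ~~ b x) s + count (fun x => a x && b x) s = count a s.
Proof. by elim: s => //= x s <-; case: (a x); case: (b x) => /=; lia. Qed.

Import GRing.Theory Num.Theory.
Local Open Scope ring_scope.

Lemma tree_count_closed k r :
  (tree_count k r)%:R = (r.+1)%:R / (k + r).+1%:R * ('C(k.*2 + r, k))%:R :> rat.
Proof.
elim: k r => [|k IH] r; first by rewrite /= bin0 add0n mulr1 divff // pnatr_eq0.
elim: r => [|r IHr].
  rewrite tree_count0 IH addn0.
  have Hb : 'C(k.+1.*2, k.+1) = (2 * 'C(k.*2.+1, k))%N.
    have Hs : 'C(k.*2.+1, k.+1) = 'C(k.*2.+1, k).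
      by rewrite -(bin_sub (n:=k.*2.+1) (m:=k)); [congr 'C(_, _) | ]; lia.
    by rewrite doubleS binS Hs mul2n addnn.
  rewrite !addn0 Hb !addn1 natrM.
  have Hk := ler0n rat k.
  by field; rewrite !lt0r_neq0 //; lra.
rewrite tree_countS natrD IHr IH.
set a := 'C(k.*2 + r.+2, k); set b := 'C(k.*2 + r.+2, k.+1).
have Eb : 'C(k.+1.*2 + r, k.+1) = b by congr 'C(_, _); lia.
have Ec : 'C(k.+1.*2 + r.+1, k.+1) = (b + a)%N by rewrite -binS; congr 'C(_, _); lia.
have Hab : (k.+1)%:R * b%:R = (k + r.+2)%:R * a%:R :> rat.
  rewrite -!natrM mul_bin_left; congr (_ * _)%:R; lia.
rewrite Eb Ec natrD.
have -> : b%:R = (k + r.+2)%:R * a%:R / (k.+1)%:R :> rat.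
  by rewrite -Hab mulrC mulKf // pnatr_eq0.
have Hk := ler0n rat k; have Hr := ler0n rat r.
by field; rewrite !lt0r_neq0 //; lra.
Qed.

Lemma tree_count_catalan n : (tree_count n 0)%:R = catalan n.
Proof. by rewrite tree_count_closed /catalan !addn0 mulrC mul1r. Qed.

Unset Implicit Arguments.

Theorem theorem4p1 (n : nat) (hn : (2 <= n)%N) :
  (#|B321 n|%:R : rat) = catalan n - catalan n.-1 /\
  catalan n - catalan n.-1 = 3%:R / (n.+1)%:R * ('C((n.*2).-2, n.-2))%:R.
Proof.
case: n hn => [|[|m]] // _.
have Hcard : #|B321 m.+2| = tree_count m 2.
  have := count_split avoids321 starts_desc (permutations (iota 0 m.+2)).
  by rewrite -card_B321 count_starts_desc !count_avoids321 tree_count_diff; lia.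
have Hdiff : catalan m.+2 - catalan m.+1 = (tree_count m 2)%:R.
  by rewrite -!tree_count_catalan tree_count_diff natrD addrC addKr.
rewrite Hcard Hdiff tree_count_closed; split=> //.
by rewrite !doubleS !addn2.
Qed.
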